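(* Let $\alpha>0$ be fixed. Then for every sufficiently large $N\geq1$, \[ \sum_{1\leq \ell\leq N}\left|\zeta\left(\tfrac12+i\alpha\ell\right)\right|^2\ll N(\log N)^{3/2}, \] where the implied constant depends only on $\alpha$.
   Context: $\zeta$ denotes the Riemann zeta function; the sum is over integers $\ell$. *)

From Stdlib Require Import Reals.
From Coquelicot Require Import Coquelicot.
Open Scope R_scope.

Definition Cnpow_neg (n : nat) (s : C) : C :=
  ((exp (- Re s * ln (INR n)) * cos (Im s * ln (INR n)))%R,
   (- (exp (- Re s * ln (INR n)) * sin (Im s * ln (INR n))))%R).

Definition eta_partial (s : C) (N : nat) : C :=
  sum_n_m (fun n => scal ((-1) ^ (n - 1)) (Cnpow_neg n s)) 1 N.

Definition eta (s : C) : C :=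
  (real (Lim_seq (fun N => Re (eta_partial s N))),
   real (Lim_seq (fun N => Im (eta_partial s N)))).

(* Riemann zeta function in the strip Re s > 0:
   zeta(s) = eta(s) / (1 - 2^{1-s}).  On the critical line the denominator
   never vanishes, and this equals the analytic continuation of zeta. *)
Definition zeta (s : C) : C :=
  Cdiv (eta s) (Cminus (RtoC 1) (Cnpow_neg 2 (Cminus s (RtoC 1)))).

(* Since zeta(s) = eta(s) / (1 - 2^(1-s)) and |1 - 2^(1/2 - i t)| >= sqrt 2 - 1,
   it suffices to bound |eta(1/2 + i t)|^2.  For 0 <= t <= P + 1 the tail
   sum_(n > P) (-1)^(n-1) n^(-1/2 - i t) is bounded by an absolute constant: by
   summation by parts against the unimodular phases
   z_n = exp (i (PI (n - 1) - t ln n)), whose successive quotients stay in the left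
   half-plane when t <= n.  Taking P ~ alpha N, expanding |D_P(alpha l)|^2 and
   summing over l first reduces the problem to
   sum_(m, n <= P) (m n)^(-1/2) |sum_(l <= N) cos (alpha l ln (m / n))|.
   The cosine sum is at most min (N, 1 / |sin (alpha ln (m / n) / 2)|).  Splitting
   m / n into ranges [4^j, 4^(j+1)), the points alpha ln (m / n) / 2 of one range are
   spaced by >> 1 / (n 4^j) and lie within O(1) of boundedly many multiples of PI,
   so comparing with the integral of N / (1 + N |y|) bounds the range by
   O(N / (n 2^j) + 2^j ln N).  Summing gives O(N ln N), which is stronger than the
   claimed N (ln N)^(3/2). *)

From Stdlib Require Import Reals Lra Lia Psatz.
From Coquelicot Require Import Coquelicot.
Open Scope R_scope.

Lemma ln_le_sub1 x : 0 < x -> ln x <= x - 1.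
Proof. intros Hx. pose proof (exp_ineq1_le (ln x)) as H. rewrite exp_ln in H; lra. Qed.

Lemma ln_diff_bounds a b : 0 < a -> a <= b -> (b - a) / b <= ln b - ln a <= (b - a) / a.
Proof.
  intros Ha Hab.
  pose proof (ln_le_sub1 (a / b)) as Hab'. pose proof (ln_le_sub1 (b / a)) as Hba.
  rewrite ln_div in Hab', Hba by lra.
  assert (0 < a / b) by (apply Rdiv_lt_0_compat; lra).
  assert (0 < b / a) by (apply Rdiv_lt_0_compat; lra).
  replace ((b - a) / b) with (1 - a / b) by (field; lra).
  replace ((b - a) / a) with (b / a - 1) by (field; lra).
  split; [specialize (Hab' ltac:(lra)) | specialize (Hba ltac:(lra))]; lra.
Qed.

Lemma ln2_pos : 0 < ln 2.
Proof. rewrite <- ln_1. apply ln_increasing; lra. Qed.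

Lemma exp_le_compat x y : x <= y -> exp x <= exp y.
Proof. intros [H|H]; [left; now apply exp_increasing | now rewrite H]. Qed.

Lemma ln_succ_diff_ge m : (1 <= m)%nat -> / INR (S m) <= ln (INR (S m)) - ln (INR m).
Proof.
  intros Hm. destruct (ln_diff_bounds (INR m) (INR (S m))) as [H _].
  - apply lt_0_INR; lia.
  - apply le_INR; lia.
  - rewrite S_INR in H |- *. replace (INR m + 1 - INR m) with 1 in H by ring.
    unfold Rdiv in H. lra.
Qed.

Lemma ln_le_mul_ln c x y : 1 <= c -> 0 < y -> y <= c * x -> 1 <= ln x ->
  ln y <= (1 + ln c) * ln x.
Proof.
  intros Hc Hy Hyx Hx. assert (0 < x) by nra.
  assert (ln y <= ln c + ln x) by (rewrite <- ln_mult by lra; apply ln_le; lra).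
  assert (0 <= ln c) by (rewrite <- ln_1; apply ln_le; lra).
  nra.
Qed.

Lemma ln_INR_ge_1 N : (3 <= N)%nat -> 1 <= ln (INR N).
Proof.
  intros HN. rewrite <- (ln_exp 1). apply ln_le; [apply exp_pos|].
  pose proof exp_le_3. apply Rle_trans with 3; [lra|].
  replace 3 with (INR 3) by (simpl; ring). now apply le_INR.
Qed.

Lemma Rpower_ge_self x p : 1 <= x -> 1 <= p -> x <= Rpower x p.
Proof.
  intros Hx Hp. rewrite <- (Rpower_1 x) at 1 by lra. now apply Rle_Rpower.
Qed.

Lemma Rabs_sin_le x : Rabs (sin x) <= Rabs x.
Proof.
  assert (Hpos : forall y, 0 < y -> Rabs (sin y) <= y).
  { intros y Hy. pose proof (sin_lt_x y Hy). pose proof (SIN_bound y).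
    destruct (Rle_dec y 1).
    - assert (0 <= sin y) by (apply sin_ge_0; pose proof PI2_1; lra).
      rewrite Rabs_right; lra.
    - apply Rabs_le; lra. }
  destruct (Rtotal_order x 0) as [H|[->|H]].
  - replace (sin x) with (- sin (- x)) by (rewrite sin_neg; ring).
    rewrite Rabs_Ropp, (Rabs_left x) by lra. apply Hpos; lra.
  - rewrite sin_0; lra.
  - rewrite (Rabs_right x) by lra. now apply Hpos.
Qed.

Lemma two_sub_two_cos_le d : 2 - 2 * cos d <= d ^ 2.
Proof.
  replace (cos d) with (cos (2 * (d / 2))) by (f_equal; field).
  rewrite cos_2a_sin. pose proof (Rsqr_le_abs_1 _ _ (Rabs_sin_le (d / 2))). unfold Rsqr in *.
  replace (d ^ 2) with (4 * (d / 2 * (d / 2))) by field. lra.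
Qed.

Lemma Rabs_sin_ge_third y : Rabs y <= PI / 2 -> Rabs y / 3 <= Rabs (sin y).
Proof.
  assert (Hpos : forall y, 0 <= y -> y <= 2 -> y / 3 <= sin y).
  { intros z Hz0 Hz2. pose proof PI2_1.
    destruct (SIN z Hz0 ltac:(lra)) as [Hs _].
    eapply Rle_trans; [|exact Hs].
    replace (sin_lb z) with (z - z^3/6 + z^5/120 - z^7/5040)
      by (unfold sin_lb, sin_approx, sin_term; simpl; field).
    assert (0 <= z^5/120 - z^7/5040).
    { replace (z^5/120 - z^7/5040) with (z^5 * (42 - z^2) / 5040) by field.
      apply Rdiv_le_0_compat; [apply Rmult_le_pos; [apply pow_le|]; nra | lra]. }
    nra. }
  intros H. pose proof PI_4.
  destruct (Rle_dec 0 y).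
  - rewrite Rabs_right in H |- * by lra. specialize (Hpos y r ltac:(lra)).
    rewrite Rabs_right; lra.
  - rewrite Rabs_left in H |- * by lra. specialize (Hpos (- y) ltac:(lra) ltac:(lra)).
    rewrite sin_neg in Hpos. rewrite Rabs_left; lra.
Qed.

Lemma Rabs_sin_sub_mult_PI (k : nat) x : Rabs (sin (x - INR k * PI)) = Rabs (sin x).
Proof.
  induction k as [|k IH].
  - simpl. now rewrite Rmult_0_l, Rminus_0_r.
  - rewrite S_INR, <- IH, <- Rabs_Ropp.
    replace (x - (INR k + 1) * PI) with ((x - INR k * PI) - PI) by ring.
    rewrite sin_minus, sin_PI, cos_PI. f_equal. ring.
Qed.

(* [x] lies within [PI/2] of one of the [W] multiples [(k0 + i) PI]. *)
Lemma Rabs_sin_ge_dist_mult_PI k0 W c0 L x :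
  INR k0 * PI <= c0 -> c0 < (INR k0 + 1) * PI -> c0 <= x -> x <= c0 + L ->
  L / PI + 2 <= INR W ->
  exists i, (i < W)%nat /\ Rabs (x - INR (k0 + i) * PI) / 3 <= Rabs (sin x).
Proof.
  intros H1 H2 H3 H4 H5. pose proof PI_RGT_0 as Hpi.
  assert (0 <= c0) by (pose proof (pos_INR k0); nra).
  destruct (nfloor_ex (x / PI + 1/2)) as [k [Hk1 Hk2]].
  { apply Rplus_le_le_0_compat; [apply Rdiv_le_0_compat|]; lra. }
  assert (Hx : x / PI * PI = x) by (field; lra).
  assert (Hc0 : INR k0 <= c0 / PI < INR k0 + 1).
  { split; [apply Rmult_le_reg_r with PI | apply Rmult_lt_reg_r with PI];
      try (unfold Rdiv; rewrite Rmult_assoc, Rinv_l, Rmult_1_r); lra. }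
  assert (Hxc : c0 / PI <= x / PI <= c0 / PI + L / PI).
  { unfold Rdiv. rewrite <- Rmult_plus_distr_r.
    split; apply Rmult_le_compat_r; try lra; left; apply Rinv_0_lt_compat; lra. }
  assert (Hkk : (k0 <= k)%nat).
  { destruct (Nat.le_gt_cases k0 k) as [h|h]; auto.
    assert (INR k + 1 <= INR k0) by (rewrite <- S_INR; apply le_INR; lia). lra. }
  exists (k - k0)%nat. split.
  - apply INR_lt. rewrite minus_INR by auto. lra.
  - replace (k0 + (k - k0))%nat with k by lia.
    rewrite <- (Rabs_sin_sub_mult_PI k x). apply Rabs_sin_ge_third.
    replace (x - INR k * PI) with ((x / PI - INR k) * PI) by (field; lra).
    rewrite Rabs_mult, (Rabs_right PI) by lra.
    assert (Rabs (x / PI - INR k) <= 1/2) by (apply Rabs_le; lra).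
    nra.
Qed.

(* [R]-valued forms of Coquelicot's [sum_n_m] lemmas: the generic ones are stated with
   [plus] and [mult], which [lra] and [ring] do not see through. *)

Lemma sum_n_Sm_R (f : nat -> R) n m :
  (n <= S m)%nat -> sum_n_m f n (S m) = sum_n_m f n m + f (S m).
Proof. intros; now rewrite sum_n_Sm. Qed.

Lemma sum_n_m_zero_R (f : nat -> R) n m : (m < n)%nat -> sum_n_m f n m = 0.
Proof. exact (sum_n_m_zero f n m). Qed.

Lemma sum_n_m_ext_R (f g : nat -> R) n m :
  (forall k, (n <= k <= m)%nat -> f k = g k) -> sum_n_m f n m = sum_n_m g n m.
Proof. apply sum_n_m_ext_loc. Qed.

Lemma sum_n_m_Chasles_R (f : nat -> R) n m k : (n <= S m)%nat -> (m <= k)%nat ->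
  sum_n_m f n k = sum_n_m f n m + sum_n_m f (S m) k.
Proof. intros; now rewrite (sum_n_m_Chasles f n m k). Qed.

Lemma sum_n_m_plus_R (f g : nat -> R) n m :
  sum_n_m (fun k => f k + g k) n m = sum_n_m f n m + sum_n_m g n m.
Proof. apply (sum_n_m_plus f g). Qed.

Lemma sum_n_m_mult_l_R (c : R) (f : nat -> R) n m :
  sum_n_m (fun k => c * f k) n m = c * sum_n_m f n m.
Proof. apply (sum_n_m_mult_l (K := R_Ring)). Qed.

Lemma sum_n_m_le_loc (f g : nat -> R) n m :
  (forall k, (n <= k <= m)%nat -> f k <= g k) -> sum_n_m f n m <= sum_n_m g n m.
Proof.
  intros H.
  rewrite (sum_n_m_ext_loc f (fun k => Rmin (f k) (g k)))
    by (intros k Hk; symmetry; apply Rmin_left, H, Hk).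
  apply sum_n_m_le; intros; apply Rmin_r.
Qed.

Lemma sum_n_m_ge0 (f : nat -> R) n m :
  (forall k, (n <= k <= m)%nat -> 0 <= f k) -> 0 <= sum_n_m f n m.
Proof.
  intros H. apply Rle_trans with (sum_n_m (fun _ => 0) n m).
  - rewrite sum_n_m_const; lra.
  - now apply sum_n_m_le_loc.
Qed.

Lemma sum_n_m_ge_term (f : nat -> R) n m i :
  (forall k, (n <= k <= m)%nat -> 0 <= f k) -> (n <= i <= m)%nat -> f i <= sum_n_m f n m.
Proof.
  intros Hf Hi.
  rewrite (sum_n_m_Chasles_R f n i m) by lia.
  assert (0 <= sum_n_m f (S i) m) by (apply sum_n_m_ge0; intros; apply Hf; lia).
  destruct (Nat.eq_dec n i) as [<-|Hni].
  - rewrite sum_n_n; lra.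
  - destruct i as [|i]; [lia|].
    rewrite sum_n_Sm_R by lia.
    assert (0 <= sum_n_m f n i) by (apply sum_n_m_ge0; intros; apply Hf; lia). lra.
Qed.

Lemma sum_n_m_Rabs (f : nat -> R) n m :
  Rabs (sum_n_m f n m) <= sum_n_m (fun k => Rabs (f k)) n m.
Proof. exact (norm_sum_n_m (K := R_AbsRing) (V := R_NormedModule) f n m). Qed.

Lemma sum_n_m_switch (f : nat -> nat -> R) a b c d :
  sum_n_m (fun i => sum_n_m (fun j => f i j) c d) a b
  = sum_n_m (fun j => sum_n_m (fun i => f i j) a b) c d.
Proof.
  destruct (Nat.le_gt_cases a b) as [Hab|Hab].
  - induction Hab as [|b Hab IH].
    + rewrite sum_n_n. apply sum_n_m_ext; intros j. now rewrite sum_n_n.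
    + rewrite sum_n_Sm_R, IH, <- sum_n_m_plus_R by lia.
      apply sum_n_m_ext; intros; now rewrite sum_n_Sm_R by lia.
  - rewrite sum_n_m_zero_R by lia.
    rewrite (sum_n_m_ext_R _ (fun _ => 0)) by (intros; apply sum_n_m_zero_R; lia).
    now rewrite sum_n_m_const, Rmult_0_r.
Qed.

Lemma sum_n_m_sq (x : nat -> R) a b :
  sum_n_m x a b ^ 2 = sum_n_m (fun m => sum_n_m (fun n => x m * x n) a b) a b.
Proof.
  replace (sum_n_m x a b ^ 2) with (sum_n_m x a b * sum_n_m x a b) by ring.
  rewrite <- (sum_n_m_mult_r (K := R_Ring)). apply sum_n_m_ext; intros m.
  symmetry. apply (sum_n_m_mult_l (K := R_Ring)).
Qed.

Lemma sum_n_m_triangle_switch (H : nat -> nat -> R) P :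
  sum_n_m (fun m => sum_n_m (fun n => H m n) 1 m) 1 P
  = sum_n_m (fun n => sum_n_m (fun m => H m n) n P) 1 P.
Proof.
  induction P as [|P IH].
  - now rewrite !sum_n_m_zero by lia.
  - rewrite sum_n_Sm_R, IH by lia.
    rewrite (sum_n_Sm_R (fun n => sum_n_m (fun m => H m n) n (S P))), sum_n_n by lia.
    rewrite (sum_n_Sm_R (fun n => H (S P) n)) by lia.
    rewrite (sum_n_m_ext_loc (fun n => sum_n_m (fun m => H m n) n (S P))
               (fun n => sum_n_m (fun m => H m n) n P + H (S P) n))
      by (intros; apply sum_n_Sm_R; lia).
    rewrite sum_n_m_plus_R, <- Rplus_assoc; reflexivity.
Qed.

Lemma sum_sym_le_twice_upper (H : nat -> nat -> R) P :
  (forall m n, H m n = H n m) -> (forall m n, 0 <= H m n) ->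
  sum_n_m (fun m => sum_n_m (fun n => H m n) 1 P) 1 P
  <= 2 * sum_n_m (fun n => sum_n_m (fun m => H m n) n P) 1 P.
Proof.
  intros Hsym Hpos.
  rewrite (sum_n_m_ext_loc (fun m => sum_n_m (fun n => H m n) 1 P)
             (fun m => sum_n_m (fun n => H m n) 1 m + sum_n_m (fun n => H m n) (S m) P))
    by (intros; apply sum_n_m_Chasles_R; lia).
  rewrite sum_n_m_plus_R, sum_n_m_triangle_switch.
  enough (sum_n_m (fun m => sum_n_m (fun n => H m n) (S m) P) 1 P
          <= sum_n_m (fun n => sum_n_m (fun m => H m n) n P) 1 P) by lra.
  apply sum_n_m_le_loc; intros m Hm.
  rewrite (sum_n_m_Chasles_R (fun m' => H m' m) m m P), sum_n_n by lia.
  rewrite (sum_n_m_ext (fun n => H m n) (fun n => H n m)) by auto.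
  specialize (Hpos m m); lra.
Qed.

Lemma sum_n_m_telescope (f : nat -> R) a b :
  (a <= b)%nat -> sum_n_m (fun n => f (n - 1)%nat - f n) (S a) b = f a - f b.
Proof.
  induction b as [|b IH]; intros Hab.
  - replace a with 0%nat by lia. rewrite sum_n_m_zero_R by lia. lra.
  - destruct (Nat.eq_dec a (S b)) as [<-|].
    + rewrite sum_n_m_zero_R by lia. lra.
    + rewrite sum_n_Sm_R, IH by lia. replace (S b - 1)%nat with b by lia. lra.
Qed.

Lemma sum_n_m_blocks (f : nat -> R) (c : nat -> nat) J P :
  (forall j, c j < c (S j))%nat -> (P < c (S J))%nat ->
  sum_n_m f (c 0%nat) P
  = sum_n_m (fun j => sum_n_m f (c j) (Nat.min (c (S j) - 1) P)) 0 J.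
Proof.
  intros Hc. assert (Hmono : forall i j, (i <= j)%nat -> (c i <= c j)%nat).
  { intros i j Hij. induction Hij; [lia|]. specialize (Hc m); lia. }
  revert P. induction J as [|J IH]; intros P HP.
  - rewrite sum_n_n. f_equal. lia.
  - rewrite sum_n_Sm_R by lia.
    destruct (Nat.lt_ge_cases P (c (S J))) as [Hlt|Hge].
    + rewrite IH by lia. rewrite (sum_n_m_zero_R _ (c (S J))) by lia. lra.
    + rewrite (sum_n_m_Chasles_R f (c 0%nat) (c (S J) - 1) P)
        by (specialize (Hmono 0%nat (S J)); specialize (Hc 0%nat); lia).
      rewrite IH by (specialize (Hc J); lia).
      replace (S (c (S J) - 1)) with (c (S J)) by (specialize (Hc J); lia).
      replace (Nat.min (c (S (S J)) - 1) P) with P by lia.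
      f_equal. apply sum_n_m_ext_loc; intros j Hj.
      f_equal. specialize (Hmono (S j) (S J)). lia.
Qed.

Lemma sum_harmonic_le P : (1 <= P)%nat -> sum_n_m (fun n => / INR n) 1 P <= 1 + ln (INR P).
Proof.
  induction P as [|P IH]; intros HP; [lia|].
  destruct (Nat.eq_dec P 0) as [->|HP0].
  - rewrite sum_n_n. simpl. rewrite ln_1. lra.
  - rewrite sum_n_Sm_R by lia. specialize (IH ltac:(lia)).
    pose proof (ln_succ_diff_ge P ltac:(lia)). lra.
Qed.

Lemma sum_inv_pow2_le J : sum_n_m (fun j => / 2 ^ j) 0 J <= 2.
Proof.
  enough (H : sum_n_m (fun j => / 2 ^ j) 0 J <= 2 - / 2 ^ J)
    by (assert (0 < / 2 ^ J) by (apply Rinv_0_lt_compat, pow_lt; lra); lra).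
  induction J as [|J IH].
  - rewrite sum_n_n. simpl; lra.
  - rewrite sum_n_Sm_R by lia.
    assert (0 < 2 ^ J) by (apply pow_lt; lra).
    simpl. replace (/ (2 * 2 ^ J)) with (/ 2 * / 2 ^ J) by (field; lra). lra.
Qed.

Lemma count_multiples_le q P : (1 <= q)%nat ->
  sum_n_m (fun n => if Nat.leb (n * q) P then 1 else 0) 1 P <= INR P / INR q.
Proof.
  intros Hq. assert (Hq' : 0 < INR q) by (apply lt_0_INR; lia).
  set (F := fun n => if Nat.leb (n * q) P then 1 else 0).
  enough (forall L, sum_n_m F 1 L <= INR P / INR q) by auto.
  induction L as [|L IH].
  - rewrite sum_n_m_zero_R by lia. apply Rdiv_le_0_compat; [apply pos_INR | lra].
  - rewrite sum_n_Sm_R by lia. unfold F at 2.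
    destruct (Nat.leb (S L * q) P) eqn:E; [|lra].
    apply Nat.leb_le in E.
    rewrite (sum_n_m_ext_loc F (fun _ => 1)).
    2: { intros k Hk. unfold F. replace (Nat.leb (k * q) P) with true; [easy|].
         symmetry; apply Nat.leb_le; nia. }
    rewrite sum_n_m_const, Rmult_1_r, <- S_INR.
    replace (S L - 1)%nat with L by lia.
    apply Rmult_le_reg_r with (INR q); [lra|].
    unfold Rdiv. rewrite Rmult_assoc, Rinv_l, Rmult_1_r, <- mult_INR by lra.
    apply le_INR; lia.
Qed.

(** * Dirichlet cosine sums and peaks *)

Definition cos_sum (N : nat) (th : R) : R := sum_n_m (fun l => cos (INR l * th)) 1 N.

Lemma cos_sum_closed_form N th :
  2 * sin (th / 2) * cos_sum N th = sin ((INR N + 1/2) * th) - sin (th / 2).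
Proof.
  unfold cos_sum. induction N as [|N IH].
  - rewrite sum_n_m_zero_R by lia. simpl. replace ((0 + 1/2) * th) with (th / 2) by field. ring.
  - rewrite sum_n_Sm_R, Rmult_plus_distr_l, IH, S_INR by lia.
    replace ((INR N + 1 + 1/2) * th) with ((INR N + 1) * th + th / 2) by field.
    replace ((INR N + 1/2) * th) with ((INR N + 1) * th - th / 2) by field.
    rewrite sin_plus, sin_minus. ring.
Qed.

Lemma Rabs_cos_sum_le N th : Rabs (cos_sum N th) <= INR N.
Proof.
  eapply Rle_trans; [apply sum_n_m_Rabs|].
  eapply Rle_trans.
  - apply sum_n_m_le with (b := fun _ => 1). intros k. apply Rabs_le, COS_bound.
  - rewrite sum_n_m_const. replace (S N - 1)%nat with N by lia. lra.
Qed.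

Lemma Rabs_sin_half_mul_cos_sum_le N th : Rabs (sin (th / 2)) * Rabs (cos_sum N th) <= 1.
Proof.
  rewrite <- Rabs_mult.
  apply Rmult_le_reg_l with 2; [lra|].
  rewrite <- (Rabs_right 2) at 1 by lra. rewrite <- Rabs_mult, <- Rmult_assoc, cos_sum_closed_form.
  pose proof (SIN_bound ((INR N + 1/2) * th)). pose proof (SIN_bound (th / 2)).
  apply Rabs_le; lra.
Qed.

Definition peak (N y : R) : R := N / (1 + N * Rabs y).

Definition peak_primitive (N y : R) : R :=
  if Rle_dec 0 y then ln (1 + N * y) else - ln (1 - N * y).

Section Peak.

Variable N : R.
Hypothesis N_gt0 : 0 < N.

Lemma peak_ge0 y : 0 <= peak N y.
Proof. unfold peak. pose proof (Rabs_pos y). apply Rdiv_le_0_compat; nra. Qed.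

Lemma peak_le y : peak N y <= N.
Proof.
  unfold peak. pose proof (Rabs_pos y).
  apply Rmult_le_reg_r with (1 + N * Rabs y); [nra|].
  unfold Rdiv. rewrite Rmult_assoc, Rinv_l by nra. nra.
Qed.

Lemma le_4_peak F y s : 0 <= F -> F <= N -> s * F <= 1 -> Rabs y / 3 <= s ->
  F <= 4 * peak N y.
Proof.
  intros HF0 HFN Hs Hy. unfold peak. pose proof (Rabs_pos y).
  apply Rmult_le_reg_r with (1 + N * Rabs y); [nra|].
  replace (4 * (N / (1 + N * Rabs y)) * (1 + N * Rabs y)) with (4 * N) by (field; nra).
  assert (F * Rabs y <= 3) by nra. nra.
Qed.

Lemma peak_primitive_ge0 y : 0 <= y -> 0 <= peak_primitive N y.
Proof.
  intros Hy. unfold peak_primitive. destruct Rle_dec; [|lra].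
  rewrite <- ln_1. apply ln_le; nra.
Qed.

Lemma peak_primitive_le0 y : y < 0 -> peak_primitive N y <= 0.
Proof.
  intros Hy. unfold peak_primitive. destruct Rle_dec; [lra|].
  enough (ln 1 <= ln (1 - N * y)) by (rewrite ln_1 in *; lra). apply ln_le; nra.
Qed.

Lemma Rabs_peak_primitive_le y : Rabs (peak_primitive N y) <= ln (1 + N * Rabs y).
Proof.
  destruct (Rle_dec 0 y) as [Hy|Hy].
  - pose proof (peak_primitive_ge0 y Hy).
    rewrite Rabs_right, (Rabs_right y) by lra. unfold peak_primitive. destruct Rle_dec; lra.
  - pose proof (peak_primitive_le0 y ltac:(lra)).
    rewrite Rabs_left1, (Rabs_left y) by lra. unfold peak_primitive. destruct Rle_dec; [lra|].
    replace (1 + N * - y) with (1 - N * y) by ring. lra.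
Qed.

Lemma peak_le_primitive_diff_pos g y y' : 0 < g -> 0 <= y -> y + g <= y' ->
  g * peak N y' <= peak_primitive N y' - peak_primitive N y.
Proof.
  intros Hg Hy Hy'. unfold peak_primitive, peak.
  destruct (Rle_dec 0 y'); [|lra]. destruct (Rle_dec 0 y); [|lra].
  destruct (ln_diff_bounds (1 + N * y) (1 + N * y')) as [H _]; try nra.
  eapply Rle_trans; [|exact H]. rewrite Rabs_right by lra.
  replace (1 + N * y' - (1 + N * y)) with (N * (y' - y)) by ring.
  unfold Rdiv. rewrite <- Rmult_assoc. apply Rmult_le_compat_r; [|nra].
  left; apply Rinv_0_lt_compat; nra.
Qed.

Lemma peak_le_primitive_diff_neg g y y' : 0 < g -> y' < 0 -> y + g <= y' ->
  g * peak N y <= peak_primitive N y' - peak_primitive N y.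
Proof.
  intros Hg Hy' Hyy. unfold peak_primitive, peak.
  destruct (Rle_dec 0 y'); [lra|]. destruct (Rle_dec 0 y); [lra|].
  destruct (ln_diff_bounds (1 - N * y') (1 - N * y)) as [H _]; try nra.
  replace (- ln (1 - N * y') - - ln (1 - N * y)) with (ln (1 - N * y) - ln (1 - N * y')) by ring.
  eapply Rle_trans; [|exact H]. rewrite Rabs_left by lra.
  replace (1 - N * y - (1 - N * y')) with (N * (y' - y)) by ring.
  replace (1 + N * - y) with (1 - N * y) by ring.
  unfold Rdiv. rewrite <- Rmult_assoc. apply Rmult_le_compat_r; [|nra].
  left; apply Rinv_0_lt_compat; nra.
Qed.

Section Spaced.

Variables (u : nat -> R) (g : R) (a : nat).
Hypothesis g_gt0 : 0 < g.

(* The peaks at negative points are controlled by their right neighbours, those at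
   nonnegative points by their left neighbours; only the crossing step costs [2 N]. *)
Lemma sum_peak_spaced_aux b : (a <= b)%nat ->
  (forall m, (a <= m < b)%nat -> u m + g <= u (S m)) ->
  sum_n_m (fun m => peak N (u m)) a b
  <= N + (if Rle_dec 0 (u b) then 2 * N else peak N (u b))
     + (peak_primitive N (u b) - peak_primitive N (u a)) / g.
Proof.
  assert (single : sum_n_m (fun m => peak N (u m)) a a
    <= N + (if Rle_dec 0 (u a) then 2 * N else peak N (u a))
       + (peak_primitive N (u a) - peak_primitive N (u a)) / g).
  { rewrite sum_n_n, Rminus_diag, Rdiv_0_l.
    pose proof (peak_le (u a)). pose proof (peak_ge0 (u a)). destruct Rle_dec; lra. }
  induction b as [|b IH]; intros Hab Hsp.
  - replace a with 0%nat in * by lia. apply single.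
  - destruct (Nat.eq_dec a (S b)) as [<-|Hne]; [apply single|].
    specialize (IH ltac:(lia) (fun m Hm => Hsp m ltac:(lia))).
    specialize (Hsp b ltac:(lia)).
    rewrite sum_n_Sm_R by lia.
    set (y := u b) in *. set (y' := u (S b)) in *.
    replace ((peak_primitive N y' - peak_primitive N (u a)) / g)
      with ((peak_primitive N y - peak_primitive N (u a)) / g
            + (peak_primitive N y' - peak_primitive N y) / g) by (field; lra).
    pose proof (peak_le y). pose proof (peak_le y'). pose proof (peak_ge0 y').
    assert (Hdiv : forall p q, g * p <= q -> p <= q / g).
    { intros p q Hpq. apply Rmult_le_reg_l with g; [lra|].
      replace (g * (q / g)) with q by (field; lra). exact Hpq. }
    destruct (Rle_dec 0 y) as [Hy|Hy]; destruct (Rle_dec 0 y') as [Hy'|Hy']; try lra.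
    + pose proof (Hdiv _ _ (peak_le_primitive_diff_pos g y y' g_gt0 Hy Hsp)). lra.
    + pose proof (peak_primitive_le0 y ltac:(lra)). pose proof (peak_primitive_ge0 y' Hy').
      assert (0 <= (peak_primitive N y' - peak_primitive N y) / g)
        by (apply Rdiv_le_0_compat; lra).
      lra.
    + pose proof (Hdiv _ _ (peak_le_primitive_diff_neg g y y' g_gt0 ltac:(lra) Hsp)). lra.
Qed.

Lemma sum_peak_spaced b RR : (a <= b)%nat ->
  (forall m, (a <= m < b)%nat -> u m + g <= u (S m)) ->
  Rabs (u a) <= RR -> Rabs (u b) <= RR ->
  sum_n_m (fun m => peak N (u m)) a b <= 3 * N + 2 * ln (1 + N * RR) / g.
Proof.
  intros Hab Hsp Ha Hb.
  pose proof (sum_peak_spaced_aux b Hab Hsp) as Hsum.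
  assert (Hln : forall y, Rabs y <= RR -> Rabs (peak_primitive N y) <= ln (1 + N * RR)).
  { intros y Hy. eapply Rle_trans; [apply Rabs_peak_primitive_le|].
    pose proof (Rabs_pos y). apply ln_le; nra. }
  pose proof (Hln _ Ha) as Hla. pose proof (Hln _ Hb) as Hlb.
  apply Rabs_le_between in Hla, Hlb.
  assert ((peak_primitive N (u b) - peak_primitive N (u a)) / g <= 2 * ln (1 + N * RR) / g).
  { unfold Rdiv. apply Rmult_le_compat_r; [left; apply Rinv_0_lt_compat|]; lra. }
  pose proof (peak_le (u b)). destruct Rle_dec; lra.
Qed.

End Spaced.

End Peak.

(** * The double sum over pairs of frequencies *)

(* [n^(-1/2)] in the shape produced by [Cnpow_neg], so that [Re_eta_term] holds by conversion. *)
Definition inv_sqrt (n : nat) : R := exp (- (1/2) * ln (INR n)).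

Lemma inv_sqrt_pos n : 0 < inv_sqrt n.
Proof. apply exp_pos. Qed.

Lemma inv_sqrt_sq n : (1 <= n)%nat -> inv_sqrt n * inv_sqrt n = / INR n.
Proof.
  intros Hn. unfold inv_sqrt. rewrite <- exp_plus.
  replace (- (1/2) * ln (INR n) + - (1/2) * ln (INR n)) with (- ln (INR n)) by field.
  rewrite exp_Ropp, exp_ln; [reflexivity|]. apply lt_0_INR; lia.
Qed.

Lemma inv_sqrt_le_compat m n : (1 <= m)%nat -> (m <= n)%nat -> inv_sqrt n <= inv_sqrt m.
Proof.
  intros Hm Hmn. unfold inv_sqrt. apply exp_le_compat.
  enough (ln (INR m) <= ln (INR n)) by lra.
  apply ln_le; [apply lt_0_INR; lia | apply le_INR; lia].
Qed.

Lemma inv_sqrt_le_1 n : (1 <= n)%nat -> inv_sqrt n <= 1.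
Proof.
  intros Hn. replace 1 with (inv_sqrt 1); [now apply inv_sqrt_le_compat|].
  unfold inv_sqrt. simpl. now rewrite ln_1, Rmult_0_r, exp_0.
Qed.

Lemma INR_mul_4pow n j : INR (n * 4 ^ j) = INR n * 4 ^ j.
Proof. rewrite mult_INR, pow_INR. replace (INR 4) with 4 by (simpl; ring). reflexivity. Qed.

Lemma ln_mul_4pow n j : (1 <= n)%nat -> ln (INR (n * 4 ^ j)) = ln (INR n) + INR j * (2 * ln 2).
Proof.
  intros Hn.
  rewrite INR_mul_4pow, ln_mult, ln_pow by first [apply lt_0_INR; lia | apply pow_lt; lra | lra].
  replace 4 with (2 * 2) by ring. rewrite ln_mult by lra. ring.
Qed.

Lemma inv_sqrt_mul_le n j m : (1 <= n)%nat -> (n * 4 ^ j <= m)%nat ->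
  inv_sqrt m * inv_sqrt n <= / (INR n * 2 ^ j).
Proof.
  intros Hn Hm. assert (0 < n * 4 ^ j)%nat by (pose proof (Nat.pow_nonzero 4 j); nia).
  assert (Hblock : inv_sqrt (n * 4 ^ j) = inv_sqrt n * / 2 ^ j).
  { unfold inv_sqrt. rewrite ln_mul_4pow, <- (exp_ln (2 ^ j)), ln_pow, <- exp_Ropp, <- exp_plus
      by first [lra | apply pow_lt; lra | auto].
    f_equal. field. }
  pose proof (inv_sqrt_le_compat (n * 4 ^ j) m ltac:(lia) Hm) as Hmono. rewrite Hblock in Hmono.
  pose proof (inv_sqrt_pos n). pose proof (inv_sqrt_pos m).
  apply Rle_trans with (inv_sqrt n * inv_sqrt n * / 2 ^ j); [nra|].
  rewrite inv_sqrt_sq, Rinv_mult by auto. lra.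
Qed.

Definition cross_term (alpha : R) (N m n : nat) : R :=
  inv_sqrt m * inv_sqrt n * Rabs (cos_sum N (alpha * (ln (INR m) - ln (INR n)))).

Lemma cross_term_ge0 alpha N m n : 0 <= cross_term alpha N m n.
Proof.
  unfold cross_term. pose proof (inv_sqrt_pos m). pose proof (inv_sqrt_pos n).
  pose proof (Rabs_pos (cos_sum N (alpha * (ln (INR m) - ln (INR n))))).
  apply Rmult_le_pos; [apply Rmult_le_pos|]; lra.
Qed.

Lemma cross_term_sym alpha N m n : cross_term alpha N m n = cross_term alpha N n m.
Proof.
  unfold cross_term, cos_sum. rewrite (Rmult_comm (inv_sqrt m)). do 2 f_equal.
  apply sum_n_m_ext; intros l.
  replace (INR l * (alpha * (ln (INR n) - ln (INR m))))
    with (- (INR l * (alpha * (ln (INR m) - ln (INR n))))) by ring.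
  symmetry; apply cos_neg.
Qed.

Lemma sum_4adic_weights_le P : (1 <= P)%nat ->
  sum_n_m (fun n => sum_n_m (fun j => if Nat.leb (n * 4 ^ j) P then 2 ^ j else 0) 0 P) 1 P
  <= 2 * INR P.
Proof.
  intros HP. rewrite sum_n_m_switch.
  apply Rle_trans with (sum_n_m (fun j => INR P * / 2 ^ j) 0 P).
  - apply sum_n_m_le; intros j.
    assert (H2j : 0 < 2 ^ j) by (apply pow_lt; lra).
    rewrite (sum_n_m_ext_R _ (fun n => (if Nat.leb (n * 4 ^ j) P then 1 else 0) * 2 ^ j))
      by (intros n _; destruct Nat.leb; ring).
    rewrite (sum_n_m_mult_r (K := R_Ring)). change (mult ?x ?y) with (x * y).
    pose proof (count_multiples_le (4 ^ j) P ltac:(pose proof (Nat.pow_nonzero 4 j); lia)) as Hc.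
    rewrite pow_INR in Hc. replace (INR 4) with (2 * 2) in Hc by (simpl; ring).
    rewrite Rpow_mult_distr in Hc.
    apply Rle_trans with (INR P / (2 ^ j * 2 ^ j) * 2 ^ j); [apply Rmult_le_compat_r; [lra | exact Hc]|].
    apply Req_le. field. lra.
  - rewrite sum_n_m_mult_l_R. pose proof (sum_inv_pow2_le P). pose proof (pos_INR P). nra.
Qed.

Section CrossTermSum.

Variables (alpha : R) (N W : nat).
Hypotheses (alpha_gt0 : 0 < alpha) (N_ge1 : (1 <= N)%nat)
  (W_large : alpha * ln 2 / PI + 2 <= INR W).

Let phase (n m : nat) : R := alpha / 2 * (ln (INR m) - ln (INR n)).
Let log_factor : R := ln (1 + INR N * (alpha * ln 2 + PI + INR W * PI)).

Lemma W_ge1 : (1 <= W)%nat.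
Proof.
  apply INR_le. pose proof PI_RGT_0. pose proof ln2_pos.
  assert (0 <= alpha * ln 2 / PI) by (apply Rdiv_le_0_compat; nra). simpl; lra.
Qed.

Lemma phase_bounds n j m : (1 <= n)%nat -> (n * 4 ^ j <= m <= n * 4 ^ S j)%nat ->
  INR j * alpha * ln 2 <= phase n m <= INR j * alpha * ln 2 + alpha * ln 2.
Proof.
  intros Hn Hm. assert (0 < n * 4 ^ j)%nat by (pose proof (Nat.pow_nonzero 4 j); nia).
  assert (L1 : ln (INR (n * 4 ^ j)) <= ln (INR m))
    by (apply ln_le; [apply lt_0_INR | apply le_INR]; lia).
  assert (L2 : ln (INR m) <= ln (INR (n * 4 ^ S j)))
    by (apply ln_le; [apply lt_0_INR | apply le_INR]; lia).
  rewrite ln_mul_4pow in L1, L2 by auto. rewrite S_INR in L2. unfold phase. split; nra.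
Qed.

Lemma phase_spaced n j m : (1 <= n)%nat -> (n * 4 ^ j <= m)%nat -> (S m <= n * 4 ^ S j)%nat ->
  phase n m + alpha / (2 * INR n * 4 ^ S j) <= phase n (S m).
Proof.
  intros Hn Hm HSm. assert (0 < n * 4 ^ j)%nat by (pose proof (Nat.pow_nonzero 4 j); nia).
  pose proof (ln_succ_diff_ge m ltac:(lia)) as Hln.
  assert (/ (INR n * 4 ^ S j) <= / INR (S m)).
  { apply Rinv_le_contravar; [apply lt_0_INR; lia|]. rewrite <- INR_mul_4pow. now apply le_INR. }
  unfold phase. replace (alpha / (2 * INR n * 4 ^ S j)) with (alpha / 2 * / (INR n * 4 ^ S j))
    by (field; split; [apply pow_nonzero; lra | apply not_0_INR; lia]).
  assert (0 < alpha / 2) by lra. nra.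
Qed.

Lemma cross_term_le_peaks n j m k0 : (1 <= n)%nat -> (n * 4 ^ j <= m <= n * 4 ^ S j)%nat ->
  INR k0 * PI <= INR j * alpha * ln 2 < (INR k0 + 1) * PI ->
  cross_term alpha N m n
  <= 4 / (INR n * 2 ^ j) * sum_n_m (fun i => peak (INR N) (phase n m - INR (k0 + i) * PI)) 0 (W - 1).
Proof.
  intros Hn Hm Hk0. pose proof (phase_bounds n j m Hn Hm) as Hph.
  destruct (Rabs_sin_ge_dist_mult_PI k0 W (INR j * alpha * ln 2) (alpha * ln 2) (phase n m))
    as [i [Hi Hsin]]; try lra.
  set (th := alpha * (ln (INR m) - ln (INR n))).
  assert (Hhalf : th / 2 = phase n m) by (unfold th, phase; field).
  pose proof (Rabs_sin_half_mul_cos_sum_le N th) as Hdir. rewrite Hhalf in Hdir.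
  pose proof (Rabs_cos_sum_le N th) as HN.
  assert (HNpos : 0 < INR N) by (apply lt_0_INR; lia).
  pose proof (le_4_peak (INR N) HNpos _ _ _ (Rabs_pos _) HN Hdir Hsin) as Hpeak.
  assert (Hsum : peak (INR N) (phase n m - INR (k0 + i) * PI)
    <= sum_n_m (fun i => peak (INR N) (phase n m - INR (k0 + i) * PI)) 0 (W - 1)).
  { apply (sum_n_m_ge_term (fun i => peak (INR N) (phase n m - INR (k0 + i) * PI)));
      [intros; apply peak_ge0; lra | lia]. }
  pose proof (inv_sqrt_mul_le n j m Hn ltac:(lia)) as Hw.
  pose proof (inv_sqrt_pos m). pose proof (inv_sqrt_pos n).
  assert (0 < / (INR n * 2 ^ j))
    by (apply Rinv_0_lt_compat, Rmult_lt_0_compat; [apply lt_0_INR; lia | apply pow_lt; lra]).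
  unfold cross_term. fold th. unfold Rdiv.
  apply Rle_trans with (/ (INR n * 2 ^ j) * Rabs (cos_sum N th)).
  - apply Rmult_le_compat_r; [apply Rabs_pos | lra].
  - nra.
Qed.

Lemma sum_block_peak_le n j k0 i P : (1 <= n)%nat -> (n * 4 ^ j <= P)%nat -> (i <= W - 1)%nat ->
  INR k0 * PI <= INR j * alpha * ln 2 < (INR k0 + 1) * PI ->
  sum_n_m (fun m => peak (INR N) (phase n m - INR (k0 + i) * PI))
    (n * 4 ^ j) (Nat.min (n * 4 ^ S j - 1) P)
  <= 3 * INR N + 2 * log_factor * (2 * INR n * 4 ^ S j / alpha).
Proof.
  intros Hn HP Hi Hk0.
  assert (Hblock : (n * 4 ^ j < n * 4 ^ S j)%nat)
    by (rewrite Nat.pow_succ_r'; pose proof (Nat.pow_nonzero 4 j); nia).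
  pose proof W_ge1 as HW1.
  assert (Hg : 0 < alpha / (2 * INR n * 4 ^ S j)).
  { apply Rdiv_lt_0_compat; [lra|]. pose proof (pow_lt 4 (S j) ltac:(lra)).
    assert (0 < INR n) by (apply lt_0_INR; lia). nra. }
  assert (Hc : forall m, (n * 4 ^ j <= m <= Nat.min (n * 4 ^ S j - 1) P)%nat ->
            Rabs (phase n m - INR (k0 + i) * PI) <= alpha * ln 2 + PI + INR W * PI).
  { intros m Hm. pose proof (phase_bounds n j m Hn ltac:(lia)).
    pose proof PI_RGT_0. pose proof ln2_pos. pose proof (pos_INR i).
    assert (INR i + 1 <= INR W) by (rewrite <- S_INR; apply le_INR; lia).
    rewrite plus_INR. apply Rabs_le. nra. }
  replace (2 * log_factor * (2 * INR n * 4 ^ S j / alpha))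
    with (2 * log_factor / (alpha / (2 * INR n * 4 ^ S j)))
    by (field; repeat split; first [lra | apply pow_nonzero; lra | apply not_0_INR; lia]).
  apply (sum_peak_spaced (INR N) ltac:(apply lt_0_INR; lia)
           (fun m => phase n m - INR (k0 + i) * PI)); [lra | lia | | apply Hc; lia | apply Hc; lia].
  intros m Hm. pose proof (phase_spaced n j m Hn ltac:(lia) ltac:(lia)). lra.
Qed.

Lemma sum_cross_term_block_le n j P : (1 <= n)%nat -> (n * 4 ^ j <= P)%nat ->
  sum_n_m (fun m => cross_term alpha N m n) (n * 4 ^ j) (Nat.min (n * 4 ^ S j - 1) P)
  <= 12 * INR W * INR N / INR n * / 2 ^ j + 64 * INR W * log_factor / alpha * 2 ^ j.
Proof.
  intros Hn HP. pose proof PI_RGT_0. pose proof ln2_pos.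
  destruct (nfloor_ex (INR j * alpha * ln 2 / PI)) as [k0 Hk0].
  { apply Rdiv_le_0_compat; [|lra]. pose proof (pos_INR j). apply Rmult_le_pos; nra. }
  assert (Hk0' : INR k0 * PI <= INR j * alpha * ln 2 < (INR k0 + 1) * PI).
  { replace (INR j * alpha * ln 2) with (INR j * alpha * ln 2 / PI * PI) by (field; lra).
    split; [apply Rmult_le_compat_r | apply Rmult_lt_compat_r]; lra. }
  assert (Hn2 : 0 < INR n * 2 ^ j)
    by (apply Rmult_lt_0_compat; [apply lt_0_INR; lia | apply pow_lt; lra]).
  eapply Rle_trans.
  { apply sum_n_m_le_loc. intros m Hm. apply (cross_term_le_peaks n j m k0); auto; lia. }
  rewrite sum_n_m_mult_l_R, sum_n_m_switch.
  eapply Rle_trans.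
  { apply Rmult_le_compat_l; [apply Rdiv_le_0_compat; lra|].
    apply sum_n_m_le_loc. intros i Hi. apply (sum_block_peak_le n j k0 i P); auto; lia. }
  pose proof W_ge1 as HW1.
  rewrite sum_n_m_const. replace (S (W - 1) - 0)%nat with W by lia.
  replace (4 ^ S j) with (4 * (2 ^ j * 2 ^ j))
    by (rewrite <- Rpow_mult_distr; simpl; replace (2 * 2) with 4 by ring; ring).
  apply Req_le. field. repeat split; first [lra | apply pow_nonzero; lra | apply not_0_INR; lia].
Qed.

Lemma log_factor_ge0 : 0 <= log_factor.
Proof.
  unfold log_factor. rewrite <- ln_1. apply ln_le; [lra|].
  pose proof (pos_INR N). pose proof (pos_INR W). pose proof PI_RGT_0. pose proof ln2_pos.
  assert (0 <= alpha * ln 2 + PI + INR W * PI) by nra. nra.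
Qed.

Lemma sum_cross_term_column_le n P : (1 <= n <= P)%nat ->
  sum_n_m (fun m => cross_term alpha N m n) n P
  <= 24 * INR W * INR N / INR n
     + 64 * INR W * log_factor / alpha
       * sum_n_m (fun j => if Nat.leb (n * 4 ^ j) P then 2 ^ j else 0) 0 P.
Proof.
  intros Hn.
  assert (Hincr : forall j, (n * 4 ^ j < n * 4 ^ S j)%nat)
    by (intros j; rewrite Nat.pow_succ_r'; pose proof (Nat.pow_nonzero 4 j); nia).
  assert (Hlast : (P < n * 4 ^ S P)%nat).
  { enough (forall k, (k < 4 ^ k)%nat) by (specialize (H (S P)); nia).
    induction k; simpl; lia. }
  replace (sum_n_m (fun m => cross_term alpha N m n) n P)
    with (sum_n_m (fun m => cross_term alpha N m n) (n * 4 ^ 0) P) by (simpl; now rewrite Nat.mul_1_r).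
  rewrite (sum_n_m_blocks _ (fun j => n * 4 ^ j)%nat P P Hincr Hlast).
  assert (HWN : 0 <= 12 * INR W * INR N / INR n).
  { pose proof (pos_INR W). pose proof (pos_INR N).
    apply Rdiv_le_0_compat; [nra | apply lt_0_INR; lia]. }
  eapply Rle_trans.
  { apply sum_n_m_le_loc with
      (g := fun j => 12 * INR W * INR N / INR n * / 2 ^ j
                     + 64 * INR W * log_factor / alpha * (if Nat.leb (n * 4 ^ j) P then 2 ^ j else 0)).
    intros j _. destruct (Nat.leb (n * 4 ^ j) P) eqn:E.
    - apply Nat.leb_le in E. now apply sum_cross_term_block_le; [lia|].
    - apply Nat.leb_gt in E. rewrite sum_n_m_zero_R by lia.
      assert (0 < / 2 ^ j) by (apply Rinv_0_lt_compat, pow_lt; lra). nra. }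
  rewrite sum_n_m_plus_R, !sum_n_m_mult_l_R.
  pose proof (sum_inv_pow2_le P). apply Rplus_le_compat_r.
  apply Rle_trans with (12 * INR W * INR N / INR n * 2); [apply Rmult_le_compat_l|]; lra.
Qed.

Lemma sum_cross_term_le P : (1 <= P)%nat ->
  sum_n_m (fun m => sum_n_m (fun n => cross_term alpha N m n) 1 P) 1 P
  <= 48 * INR W * INR N * (1 + ln (INR P)) + 256 * INR W * log_factor / alpha * INR P.
Proof.
  intros HP.
  eapply Rle_trans.
  { apply sum_sym_le_twice_upper; [apply cross_term_sym | apply cross_term_ge0]. }
  eapply Rle_trans.
  { apply Rmult_le_compat_l; [lra|].
    apply sum_n_m_le_loc. intros n Hn. apply sum_cross_term_column_le; lia. }
  rewrite sum_n_m_plus_R, sum_n_m_mult_l_R.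
  rewrite (sum_n_m_ext_R (fun n => 24 * INR W * INR N / INR n) (fun n => 24 * INR W * INR N * / INR n))
    by reflexivity.
  rewrite sum_n_m_mult_l_R.
  pose proof (sum_harmonic_le P HP). pose proof (sum_4adic_weights_le P HP).
  pose proof (pos_INR W). pose proof (pos_INR N). pose proof log_factor_ge0.
  assert (0 <= 24 * INR W * INR N) by nra.
  assert (0 <= 64 * INR W * log_factor / alpha) by (apply Rdiv_le_0_compat; nra).
  nra.
Qed.

End CrossTermSum.

Lemma sum_cross_term_le_N_ln_N alpha N W P : 0 < alpha -> (3 <= N)%nat -> (1 <= P)%nat ->
  alpha * ln 2 / PI + 2 <= INR W -> INR P <= (alpha + 1) * INR N ->
  sum_n_m (fun m => sum_n_m (fun n => cross_term alpha N m n) 1 P) 1 P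
  <= (48 * INR W * (2 + ln (alpha + 1))
      + 256 * INR W * (1 + ln (1 + (alpha * ln 2 + PI + INR W * PI))) * (alpha + 1) / alpha)
     * (INR N * ln (INR N)).
Proof.
  intros Ha HN HP HW HPN. set (RR := alpha * ln 2 + PI + INR W * PI).
  pose proof PI_RGT_0. pose proof ln2_pos. pose proof (pos_INR W).
  eapply Rle_trans; [apply (sum_cross_term_le alpha N W Ha ltac:(lia) HW P HP)|]. fold RR.
  assert (0 <= RR) by (unfold RR; nra).
  assert (HN1 : 1 <= INR N) by (apply (le_INR 1); lia).
  assert (HP0 : 0 < INR P) by (apply lt_0_INR; lia).
  pose proof (ln_INR_ge_1 N HN) as HL.
  assert (HlnP : 1 + ln (INR P) <= (2 + ln (alpha + 1)) * ln (INR N))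
    by (pose proof (ln_le_mul_ln (alpha + 1) (INR N) (INR P) ltac:(lra) HP0 HPN HL); lra).
  assert (HLg : ln (1 + INR N * RR) <= (1 + ln (1 + RR)) * ln (INR N)) by (apply ln_le_mul_ln; nra).
  assert (0 <= ln (1 + INR N * RR)) by (rewrite <- ln_1; apply ln_le; nra).
  assert (0 < / alpha) by (apply Rinv_0_lt_compat; lra).
  rewrite Rmult_plus_distr_r. apply Rplus_le_compat.
  - replace (48 * INR W * (2 + ln (alpha + 1)) * (INR N * ln (INR N)))
      with (48 * INR W * INR N * ((2 + ln (alpha + 1)) * ln (INR N))) by ring.
    apply Rmult_le_compat_l; nra.
  - unfold Rdiv.
    replace (256 * INR W * (1 + ln (1 + RR)) * (alpha + 1) * / alpha * (INR N * ln (INR N)))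
      with (256 * INR W * / alpha * (((1 + ln (1 + RR)) * ln (INR N)) * ((alpha + 1) * INR N))) by ring.
    replace (256 * INR W * ln (1 + INR N * RR) * / alpha * INR P)
      with (256 * INR W * / alpha * (ln (1 + INR N * RR) * INR P)) by ring.
    apply Rmult_le_compat_l; [nra|]. apply Rmult_le_compat; lra.
Qed.

(** * The tail of the eta series on the critical line *)

Lemma sum_n_Sm_C (f : nat -> C) n m :
  (n <= S m)%nat -> sum_n_m f n (S m) = (sum_n_m f n m + f (S m))%C.
Proof. intros; now rewrite sum_n_Sm. Qed.

Lemma sum_n_m_Chasles_C (f : nat -> C) n m k : (n <= S m)%nat -> (m <= k)%nat ->
  sum_n_m f n k = (sum_n_m f n m + sum_n_m f (S m) k)%C.
Proof. intros; now rewrite (sum_n_m_Chasles f n m k). Qed.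

Lemma Re_sum_n_m (f : nat -> C) n m : Re (sum_n_m f n m) = sum_n_m (fun k => Re (f k)) n m.
Proof.
  induction m as [|m IH].
  - destruct n; [now rewrite !sum_n_n | now rewrite sum_n_m_zero, sum_n_m_zero_R by lia].
  - destruct (Nat.le_gt_cases n (S m)).
    + rewrite sum_n_Sm_C, sum_n_Sm_R, <- IH by lia. reflexivity.
    + now rewrite sum_n_m_zero, sum_n_m_zero_R by lia.
Qed.

Lemma Im_sum_n_m (f : nat -> C) n m : Im (sum_n_m f n m) = sum_n_m (fun k => Im (f k)) n m.
Proof.
  induction m as [|m IH].
  - destruct n; [now rewrite !sum_n_n | now rewrite sum_n_m_zero, sum_n_m_zero_R by lia].
  - destruct (Nat.le_gt_cases n (S m)).
    + rewrite sum_n_Sm_C, sum_n_Sm_R, <- IH by lia. reflexivity.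
    + now rewrite sum_n_m_zero, sum_n_m_zero_R by lia.
Qed.

Lemma Cmod_sum_abel (w z : nat -> C) A B : (A <= B)%nat -> (forall n, Cmod (z n) <= 1) ->
  Cmod (sum_n_m (fun n => w n * (z (S n) - z n))%C A B)
  <= Cmod (w A) + Cmod (w B) + sum_n_m (fun n => Cmod (w (n - 1)%nat - w n)%C) (S A) B.
Proof.
  intros HAB Hz.
  assert (Hmul : forall c n, Cmod (c * z n)%C <= Cmod c).
  { intros c n. rewrite Cmod_mult. pose proof (Cmod_ge_0 c). pose proof (Hz n).
    pose proof (Cmod_ge_0 (z n)). nra. }
  assert (Hrem : Cmod (sum_n_m (fun n => w n * (z (S n) - z n))%C A B - w B * z (S B))%C
                 <= Cmod (w A) + sum_n_m (fun n => Cmod (w (n - 1)%nat - w n)%C) (S A) B).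
  { assert (Hone : forall a, Cmod (sum_n_m (fun n => w n * (z (S n) - z n))%C a a - w a * z (S a))%C
                    <= Cmod (w a) + sum_n_m (fun n => Cmod (w (n - 1)%nat - w n)%C) (S a) a).
    { intros a. rewrite sum_n_n, sum_n_m_zero_R by lia.
      replace (w a * (z (S a) - z a) - w a * z (S a))%C with (- (w a * z a))%C by ring.
      rewrite Cmod_opp. specialize (Hmul (w a) a). lra. }
    induction B as [|B IH]; [replace A with 0%nat by lia; apply Hone|].
    destruct (Nat.eq_dec A (S B)) as [<-|HA]; [apply Hone|].
    rewrite sum_n_Sm_C, sum_n_Sm_R by lia. replace (S B - 1)%nat with B by lia.
    set (T := sum_n_m (fun n => w n * (z (S n) - z n))%C A B) in *.
    replace (T + w (S B) * (z (S (S B)) - z (S B)) - w (S B) * z (S (S B)))%C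
      with ((T - w B * z (S B)) + (w B - w (S B)) * z (S B))%C by ring.
    eapply Rle_trans; [apply Cmod_triangle|].
    specialize (IH ltac:(lia)). specialize (Hmul (w B - w (S B))%C (S B)). lra. }
  set (T := sum_n_m (fun n => w n * (z (S n) - z n))%C A B) in *.
  replace T with ((T - w B * z (S B)) + w B * z (S B))%C by ring.
  eapply Rle_trans; [apply Cmod_triangle|]. specialize (Hmul (w B) (S B)). lra.
Qed.

Definition cis (th : R) : C := (cos th, sin th).

Lemma Cmod_cis th : Cmod (cis th) = 1.
Proof.
  unfold Cmod, cis; simpl.
  replace (cos th * (cos th * 1) + sin th * (sin th * 1)) with 1
    by (pose proof (sin2_cos2 th); unfold Rsqr in *; lra).
  apply sqrt_1.
Qed.

Lemma cis_add a b : cis (a + b) = (cis a * cis b)%C.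
Proof. unfold cis, Cmult; simpl. rewrite cos_plus, sin_plus. f_equal; ring. Qed.

Lemma Cmod_cis_sub_le a b : Cmod (cis a - cis b)%C <= Rabs (a - b).
Proof.
  assert (Hsq : Cmod (cis a - cis b)%C ^ 2 <= (a - b) ^ 2).
  { rewrite Cmod2_alt. eapply Rle_trans; [|apply two_sub_two_cos_le].
    unfold cis; simpl. rewrite cos_minus.
    pose proof (sin2_cos2 a). pose proof (sin2_cos2 b). unfold Rsqr in *. nra. }
  rewrite <- (Rabs_right (Cmod _)) by (apply Rle_ge, Cmod_ge_0).
  apply Rsqr_le_abs_0. unfold Rsqr. simpl in Hsq. lra.
Qed.

Lemma Cmod_cis_sub_1_ge a : cos a <= 0 -> 1 <= Cmod (cis a - 1)%C.
Proof.
  intros Ha. apply Rle_trans with (sqrt 1); [rewrite sqrt_1; lra|].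
  unfold Cmod, cis. apply sqrt_le_1_alt. simpl.
  pose proof (sin2_cos2 a). unfold Rsqr in *. nra.
Qed.

Definition eta_term (t : R) (n : nat) : C := scal ((-1) ^ (n - 1)) (Cnpow_neg n ((1/2)%R, t)).

Lemma eta_partial_half t N : eta_partial ((1/2)%R, t) N = sum_n_m (eta_term t) 1 N.
Proof. reflexivity. Qed.

Lemma Re_eta_term t n : Re (eta_term t n) = (-1) ^ (n - 1) * inv_sqrt n * cos (t * ln (INR n)).
Proof.
  transitivity ((-1) ^ (n - 1) * (inv_sqrt n * cos (t * ln (INR n)))); [reflexivity | ring].
Qed.

Lemma Im_eta_term t n : Im (eta_term t n) = - ((-1) ^ (n - 1) * inv_sqrt n * sin (t * ln (INR n))).
Proof.
  transitivity ((-1) ^ (n - 1) * - (inv_sqrt n * sin (t * ln (INR n)))); [reflexivity | ring].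
Qed.

(* The sign [(-1)^(n-1)] is absorbed into the phase as [PI (n-1)]. *)
Definition eta_phase (t : R) (n : nat) : R := PI * (INR n - 1) - t * ln (INR n).
Definition eta_step (t : R) (n : nat) : R := PI - t * (ln (INR (S n)) - ln (INR n)).
Definition abel_weight (t : R) (n : nat) : C := (RtoC (inv_sqrt n) / (cis (eta_step t n) - 1))%C.

Lemma cos_sin_kPI_sub (k : nat) x :
  cos (INR k * PI - x) = (-1) ^ k * cos x /\ sin (INR k * PI - x) = - ((-1) ^ k * sin x).
Proof.
  induction k as [|k [IHc IHs]].
  - simpl. rewrite Rmult_0_l, Rminus_0_l, cos_neg, sin_neg. split; ring.
  - rewrite S_INR. replace ((INR k + 1) * PI - x) with ((INR k * PI - x) + PI) by ring.
    rewrite neg_cos, neg_sin, IHc, IHs. simpl. split; ring.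
Qed.

Lemma eta_term_cis t n : (1 <= n)%nat -> eta_term t n = (RtoC (inv_sqrt n) * cis (eta_phase t n))%C.
Proof.
  intros Hn. unfold eta_phase.
  replace (PI * (INR n - 1)) with (INR (n - 1) * PI) by (rewrite minus_INR by lia; simpl; ring).
  destruct (cos_sin_kPI_sub (n - 1) (t * ln (INR n))) as [Hc Hs].
  apply injective_projections.
  - transitivity (Re (eta_term t n)); [reflexivity|].
    rewrite Re_eta_term. simpl. rewrite Hc. ring.
  - transitivity (Im (eta_term t n)); [reflexivity|].
    rewrite Im_eta_term. simpl. rewrite Hs. ring.
Qed.

Section EtaTail.

Variable t : R.
Hypothesis t_ge0 : 0 <= t.

Lemma cos_eta_step_le0 n : (1 <= n)%nat -> t <= INR n -> cos (eta_step t n) <= 0.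
Proof.
  intros Hn Htn. assert (Hn0 : 0 < INR n) by (apply lt_0_INR; lia).
  destruct (ln_diff_bounds (INR n) (INR (S n)) Hn0 ltac:(apply le_INR; lia)) as [L1 L2].
  replace (INR (S n) - INR n) with 1 in L1, L2 by (rewrite S_INR; ring).
  set (d := ln (INR (S n)) - ln (INR n)) in *.
  assert (0 < 1 / INR (S n)) by (apply Rdiv_lt_0_compat; [lra | apply lt_0_INR; lia]).
  assert (t * d <= 1).
  { apply Rle_trans with (t * (1 / INR n)); [apply Rmult_le_compat_l; lra|].
    unfold Rdiv. rewrite Rmult_1_l. apply Rmult_le_reg_r with (INR n); [lra|].
    rewrite Rmult_assoc, Rinv_l; lra. }
  unfold eta_step. fold d. rewrite cos_minus, cos_PI, sin_PI.
  assert (0 <= cos (t * d)) by (apply cos_ge_0; pose proof PI2_1; nra).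
  lra.
Qed.

Lemma Cmod_eta_step_denom_ge n : (1 <= n)%nat -> t <= INR n -> 1 <= Cmod (cis (eta_step t n) - 1)%C.
Proof. intros; now apply Cmod_cis_sub_1_ge, cos_eta_step_le0. Qed.

Lemma eta_step_denom_neq0 n : (1 <= n)%nat -> t <= INR n -> (cis (eta_step t n) - 1)%C <> RtoC 0.
Proof.
  intros Hn Htn E. pose proof (Cmod_eta_step_denom_ge n Hn Htn) as H.
  rewrite E, Cmod_0 in H. lra.
Qed.

Lemma eta_term_abel n : (1 <= n)%nat -> t <= INR n ->
  eta_term t n = (abel_weight t n * (cis (eta_phase t (S n)) - cis (eta_phase t n)))%C.
Proof.
  intros Hn Htn. rewrite eta_term_cis by auto.
  replace (eta_phase t (S n)) with (eta_phase t n + eta_step t n)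
    by (unfold eta_phase, eta_step; rewrite S_INR; ring).
  rewrite cis_add. unfold abel_weight.
  pose proof (eta_step_denom_neq0 n Hn Htn). field. auto.
Qed.

Lemma Cmod_abel_weight_le n : (1 <= n)%nat -> t <= INR n -> Cmod (abel_weight t n) <= inv_sqrt n.
Proof.
  intros Hn Htn. unfold abel_weight.
  rewrite Cmod_div, Cmod_R, Rabs_right
    by (apply eta_step_denom_neq0 || apply Rle_ge, Rlt_le, inv_sqrt_pos; auto).
  pose proof (Cmod_eta_step_denom_ge n Hn Htn). pose proof (inv_sqrt_pos n).
  apply Rmult_le_reg_r with (Cmod (cis (eta_step t n) - 1)%C); [lra|].
  unfold Rdiv. rewrite Rmult_assoc, Rinv_l by lra. nra.
Qed.

Lemma Rabs_eta_step_diff_le n : (2 <= n)%nat ->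
  Rabs (eta_step t n - eta_step t (n - 1)) <= 2 * t * (/ INR (n - 1) - / INR n).
Proof.
  intros Hn. unfold eta_step. replace (S (n - 1)) with n by lia.
  rewrite S_INR, minus_INR by lia. simpl (INR 1).
  set (x := INR n). assert (Hx : 2 <= x) by (unfold x; apply (le_INR 2); auto).
  destruct (ln_diff_bounds (x - 1) x ltac:(lra) ltac:(lra)) as [P1 P2].
  destruct (ln_diff_bounds x (x + 1) ltac:(lra) ltac:(lra)) as [Q1 Q2].
  replace (x - (x - 1)) with 1 in P1, P2 by ring. replace (x + 1 - x) with 1 in Q1, Q2 by ring.
  assert (1 / (x + 1) <= 1 / x) by (apply Rmult_le_compat_l; [lra|]; apply Rinv_le_contravar; lra).
  assert (1 / x <= 1 / (x - 1)) by (apply Rmult_le_compat_l; [lra|]; apply Rinv_le_contravar; lra).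
  assert (1 / (x - 1) - 1 / (x + 1) <= 2 * (/ (x - 1) - / x)).
  { replace (1 / (x - 1) - 1 / (x + 1)) with (2 / ((x - 1) * (x + 1))) by (field; lra).
    replace (2 * (/ (x - 1) - / x)) with (2 / ((x - 1) * x)) by (field; lra).
    apply Rmult_le_compat_l; [lra|]. apply Rinv_le_contravar; nra. }
  replace (PI - t * (ln (x + 1) - ln x) - (PI - t * (ln x - ln (x - 1))))
    with (t * ((ln x - ln (x - 1)) - (ln (x + 1) - ln x))) by ring.
  rewrite Rabs_mult, Rabs_right, Rabs_right by lra.
  replace (2 * t * (/ (x - 1) - / x)) with (t * (2 * (/ (x - 1) - / x))) by ring.
  apply Rmult_le_compat_l; [lra|]. unfold Rdiv in *. lra.
Qed.

Lemma Cmod_abel_weight_diff_le n : (2 <= n)%nat -> t <= INR (n - 1) ->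
  Cmod (abel_weight t (n - 1) - abel_weight t n)%C
  <= (inv_sqrt (n - 1) - inv_sqrt n) + 2 * t * (/ INR (n - 1) - / INR n).
Proof.
  intros Hn Htn. assert (Htn' : t <= INR n) by (eapply Rle_trans; [exact Htn | apply le_INR; lia]).
  set (E1 := (cis (eta_step t (n - 1)) - 1)%C). set (E2 := (cis (eta_step t n) - 1)%C).
  pose proof (eta_step_denom_neq0 (n - 1) ltac:(lia) Htn) as N1.
  pose proof (eta_step_denom_neq0 n ltac:(lia) Htn') as N2.
  pose proof (Cmod_eta_step_denom_ge (n - 1) ltac:(lia) Htn) as M1.
  pose proof (Cmod_eta_step_denom_ge n ltac:(lia) Htn') as M2. fold E1 E2 in N1, N2, M1, M2.
  assert (Eq : (abel_weight t (n - 1) - abel_weight t n)%C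
    = (RtoC (inv_sqrt (n - 1) - inv_sqrt n) / E1
       + RtoC (inv_sqrt n) * ((cis (eta_step t n) - cis (eta_step t (n - 1))) / (E1 * E2)))%C).
  { unfold abel_weight. fold E1 E2.
    replace (cis (eta_step t n) - cis (eta_step t (n - 1)))%C with (E2 - E1)%C by (unfold E1, E2; ring).
    rewrite RtoC_minus. field. auto. }
  rewrite Eq. eapply Rle_trans; [apply Cmod_triangle|].
  rewrite Cmod_mult, !Cmod_div, Cmod_mult, !Cmod_R by (auto || apply Cmult_neq_0; auto).
  pose proof (inv_sqrt_le_compat (n - 1) n ltac:(lia) ltac:(lia)).
  pose proof (inv_sqrt_pos n). pose proof (inv_sqrt_le_1 n ltac:(lia)).
  rewrite (Rabs_right (inv_sqrt (n - 1) - inv_sqrt n)), (Rabs_right (inv_sqrt n)) by lra.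
  pose proof (Cmod_cis_sub_le (eta_step t n) (eta_step t (n - 1))).
  pose proof (Rabs_eta_step_diff_le n Hn).
  set (D := Cmod (cis (eta_step t n) - cis (eta_step t (n - 1)))%C) in *.
  assert (0 <= D) by apply Cmod_ge_0.
  apply Rplus_le_compat.
  - apply Rmult_le_reg_r with (Cmod E1); [lra|].
    unfold Rdiv. rewrite Rmult_assoc, Rinv_l by lra. nra.
  - assert (1 <= Cmod E1 * Cmod E2) by nra.
    assert (D / (Cmod E1 * Cmod E2) <= D).
    { apply Rmult_le_reg_r with (Cmod E1 * Cmod E2); [nra|].
      unfold Rdiv. rewrite Rmult_assoc, Rinv_l by nra. nra. }
    assert (0 <= D / (Cmod E1 * Cmod E2)) by (apply Rdiv_le_0_compat; nra).
    nra.
Qed.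

Lemma Cmod_eta_tail_le A B : (1 <= A <= B)%nat -> t <= INR A ->
  Cmod (sum_n_m (eta_term t) A B) <= 5.
Proof.
  intros HAB HtA.
  assert (Ht : forall n, (A <= n)%nat -> t <= INR n)
    by (intros n Hn; eapply Rle_trans; [exact HtA | apply le_INR; lia]).
  rewrite (sum_n_m_ext_loc _
             (fun n => abel_weight t n * (cis (eta_phase t (S n)) - cis (eta_phase t n)))%C)
    by (intros n Hn; apply eta_term_abel; [lia | apply Ht; lia]).
  eapply Rle_trans.
  { apply (Cmod_sum_abel (abel_weight t) (fun n => cis (eta_phase t n))); [lia|].
    intros; rewrite Cmod_cis; lra. }
  pose proof (Cmod_abel_weight_le A ltac:(lia) HtA).
  pose proof (Cmod_abel_weight_le B ltac:(lia) (Ht B ltac:(lia))).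
  pose proof (inv_sqrt_le_1 A ltac:(lia)). pose proof (inv_sqrt_le_1 B ltac:(lia)).
  pose proof (inv_sqrt_pos B).
  eapply Rle_trans.
  { apply Rplus_le_compat_l, sum_n_m_le_loc. intros n Hn.
    apply Cmod_abel_weight_diff_le; [lia | apply Ht; lia]. }
  rewrite sum_n_m_plus_R, sum_n_m_telescope by lia.
  rewrite sum_n_m_mult_l_R, (sum_n_m_telescope (fun n => / INR n)) by lia.
  assert (0 < INR A) by (apply lt_0_INR; lia).
  assert (0 < / INR B) by (apply Rinv_0_lt_compat, lt_0_INR; lia).
  assert (t * / INR A <= 1).
  { apply Rmult_le_reg_r with (INR A); [lra|]. rewrite Rmult_assoc, Rinv_l; lra. }
  assert (0 <= t * / INR B) by nra.
  lra.
Qed.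

End EtaTail.

(** * From eta to zeta *)

Lemma Rabs_real_Lim_seq_sub_le (u : nat -> R) c r P :
  (forall K, (P <= K)%nat -> Rabs (u K - c) <= r) -> Rabs (real (Lim_seq u) - c) <= r.
Proof.
  intros H.
  assert (Hlo : Rbar_le (Lim_seq (fun _ => c - r)) (Lim_seq u)).
  { apply Lim_seq_le_loc. exists P. intros n Hn. specialize (H n Hn).
    apply Rabs_le_between in H. lra. }
  assert (Hhi : Rbar_le (Lim_seq u) (Lim_seq (fun _ => c + r))).
  { apply Lim_seq_le_loc. exists P. intros n Hn. specialize (H n Hn).
    apply Rabs_le_between in H. lra. }
  rewrite Lim_seq_const in Hlo, Hhi.
  destruct (Lim_seq u) as [l| |]; simpl in *; try contradiction.
  apply Rabs_le. lra.
Qed.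

Lemma Cmod_eta_partial_sub_le t P K : 0 <= t <= INR (S P) -> (P <= K)%nat ->
  Cmod (eta_partial ((1/2)%R, t) K - eta_partial ((1/2)%R, t) P)%C <= 5.
Proof.
  intros Ht HK. rewrite !eta_partial_half.
  destruct (Nat.eq_dec P K) as [<-|HPK].
  - unfold Cminus. rewrite Cplus_opp_r, Cmod_0. lra.
  - rewrite (sum_n_m_Chasles_C _ 1 P K) by lia.
    set (a := sum_n_m (eta_term t) 1 P : C). set (b := sum_n_m (eta_term t) (S P) K : C).
    replace (a + b - a)%C with b by ring.
    apply Cmod_eta_tail_le; first [lia | lra].
Qed.

Lemma Cmod_eta_sub_partial_le t P : 0 <= t <= INR (S P) ->
  Cmod (eta ((1/2)%R, t) - eta_partial ((1/2)%R, t) P)%C <= 10.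
Proof.
  intros Ht.
  assert (Hcomp : forall f : C -> R, (forall c, Rabs (f c) <= Cmod c) ->
            (forall x y, f (x - y)%C = f x - f y) ->
            Rabs (real (Lim_seq (fun K => f (eta_partial ((1/2)%R, t) K)))
                  - f (eta_partial ((1/2)%R, t) P)) <= 5).
  { intros f Hf Hlin. apply Rabs_real_Lim_seq_sub_le with P. intros K HK.
    rewrite <- Hlin. eapply Rle_trans; [apply Hf | now apply Cmod_eta_partial_sub_le]. }
  pose proof (Hcomp Re re_le_Cmod (fun x y => eq_refl)) as HRe.
  pose proof (Hcomp Im (fun c => Rle_trans _ _ _ (Rmax_r _ _) (Rmax_Cmod c)) (fun x y => eq_refl))
    as HIm.
  eapply Rle_trans; [apply Cmod_2Rmax|].
  set (d := (eta ((1/2)%R, t) - eta_partial ((1/2)%R, t) P)%C).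
  assert (Hmax : Rmax (Rabs (fst d)) (Rabs (snd d)) <= 5) by (apply Rmax_lub; assumption).
  pose proof (Rle_trans _ _ _ (Rabs_pos (fst d)) (Rmax_l _ (Rabs (snd d)))).
  assert (sqrt 2 <= 2) by (rewrite <- (sqrt_square 2) at 2 by lra; apply sqrt_le_1_alt; lra).
  pose proof (sqrt_pos 2). nra.
Qed.

Lemma Cmod_zeta_half_sq_le t : Cmod (zeta ((1/2)%R, t)) ^ 2 <= 7 * Cmod (eta ((1/2)%R, t)) ^ 2.
Proof.
  unfold zeta.
  set (w := Cnpow_neg 2 (Cminus ((1/2)%R, t) (RtoC 1))).
  set (r := exp (1/2 * ln 2)).
  assert (Hr : r * r = 2)
    by (unfold r; rewrite <- exp_plus; replace (1/2 * ln 2 + 1/2 * ln 2) with (ln 2) by field;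
        apply exp_ln; lra).
  assert (Hw : Cmod w = r).
  { unfold w, Cnpow_neg, Cmod; simpl.
    replace (- (1 / 2 + - (1)) * ln (1 + 1)) with (1/2 * ln 2)
      by (replace (1 + 1) with 2 by ring; field).
    fold r. set (th := (t + - 0) * ln (1 + 1)).
    transitivity (sqrt (r * r)); [|apply sqrt_square, Rlt_le, exp_pos].
    f_equal. pose proof (sin2_cos2 th). unfold Rsqr in *. nra. }
  assert (Hd : 0.4 <= Cmod (RtoC 1 - w)%C).
  { pose proof (Cmod_triangle (w - RtoC 1)%C (RtoC 1)) as Htri.
    replace (w - RtoC 1 + RtoC 1)%C with w in Htri by ring.
    replace (w - RtoC 1)%C with (- (RtoC 1 - w))%C in Htri by ring.
    rewrite Cmod_opp, Cmod_1, Hw in Htri. assert (0 < r) by apply exp_pos. nra. }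
  assert (Hnz : (RtoC 1 - w)%C <> RtoC 0) by (intros Z; rewrite Z, Cmod_0 in Hd; lra).
  rewrite Cmod_div by exact Hnz.
  pose proof (Cmod_ge_0 (eta ((1/2)%R, t))).
  set (d := Cmod (RtoC 1 - w)%C) in *. set (e := Cmod (eta ((1/2)%R, t))) in *.
  replace ((e / d) ^ 2) with (e ^ 2 * / (d * d)) by (field; lra).
  assert (/ (d * d) <= 7).
  { apply Rmult_le_reg_r with (d * d); [nra|]. rewrite Rinv_l by nra. nra. }
  pose proof (pow2_ge_0 e). nra.
Qed.

Lemma Cmod_zeta_half_sq_le_partial t P : 0 <= t <= INR (S P) ->
  Cmod (zeta ((1/2)%R, t)) ^ 2 <= 14 * Cmod (eta_partial ((1/2)%R, t) P) ^ 2 + 1400.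
Proof.
  intros Ht.
  pose proof (Cmod_zeta_half_sq_le t) as Hz.
  pose proof (Cmod_eta_sub_partial_le t P Ht) as Hclose.
  set (D := eta_partial ((1/2)%R, t) P) in *. set (e := eta ((1/2)%R, t)) in *.
  assert (He : Cmod e <= Cmod D + 10).
  { pose proof (Cmod_triangle (e - D)%C D) as Htri.
    replace (e - D + D)%C with e in Htri by ring. lra. }
  pose proof (Cmod_ge_0 e). pose proof (Cmod_ge_0 D).
  assert (Cmod e * Cmod e <= (Cmod D + 10) * (Cmod D + 10)) by (apply Rmult_le_compat; lra).
  pose proof (Rle_0_sqr (Cmod D - 10)). unfold Rsqr in *. simpl. nra.
Qed.

Lemma Cmod_eta_partial_half_sq t P :
  Cmod (eta_partial ((1/2)%R, t) P) ^ 2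
  = sum_n_m (fun m => sum_n_m (fun n =>
      (-1) ^ (m - 1) * (-1) ^ (n - 1) * (inv_sqrt m * inv_sqrt n)
      * cos (t * ln (INR m) - t * ln (INR n))) 1 P) 1 P.
Proof.
  rewrite Cmod2_alt, eta_partial_half, Re_sum_n_m, Im_sum_n_m, !sum_n_m_sq, <- sum_n_m_plus_R.
  apply sum_n_m_ext_R; intros m _. rewrite <- sum_n_m_plus_R. apply sum_n_m_ext_R; intros n _.
  rewrite !Re_eta_term, !Im_eta_term, cos_minus. ring.
Qed.

Lemma sum_Cmod_eta_partial_sq_le alpha N P :
  sum_n_m (fun l => Cmod (eta_partial ((1/2)%R, alpha * INR l) P) ^ 2) 1 N
  <= sum_n_m (fun m => sum_n_m (fun n => cross_term alpha N m n) 1 P) 1 P.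
Proof.
  rewrite (sum_n_m_ext_R _ _ 1 N (fun l _ => Cmod_eta_partial_half_sq (alpha * INR l) P)).
  rewrite sum_n_m_switch. apply sum_n_m_le; intros m.
  rewrite sum_n_m_switch. apply sum_n_m_le; intros n.
  set (c := (-1) ^ (m - 1) * (-1) ^ (n - 1) * (inv_sqrt m * inv_sqrt n)).
  rewrite (sum_n_m_ext_R _ (fun l => c * cos (INR l * (alpha * (ln (INR m) - ln (INR n))))))
    by (intros; f_equal; f_equal; ring).
  rewrite sum_n_m_mult_l_R. fold (cos_sum N (alpha * (ln (INR m) - ln (INR n)))).
  unfold cross_term. eapply Rle_trans; [apply Rle_abs|].
  rewrite Rabs_mult. apply Rmult_le_compat_r; [apply Rabs_pos|].
  unfold c. rewrite !Rabs_mult, !pow_1_abs, !Rabs_right by (apply Rle_ge, Rlt_le, inv_sqrt_pos).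
  lra.
Qed.

Lemma sum_Cmod_zeta_half_sq_le_cross alpha N P : 0 < alpha -> alpha * INR N <= INR (S P) ->
  sum_n_m (fun l => Cmod (zeta ((1/2)%R, alpha * INR l)) ^ 2) 1 N
  <= 14 * sum_n_m (fun m => sum_n_m (fun n => cross_term alpha N m n) 1 P) 1 P + 1400 * INR N.
Proof.
  intros Ha HP.
  eapply Rle_trans.
  { apply sum_n_m_le_loc. intros l Hl. apply (Cmod_zeta_half_sq_le_partial _ P).
    assert (INR l <= INR N) by (apply le_INR; lia). pose proof (pos_INR l). split; nra. }
  rewrite sum_n_m_plus_R, sum_n_m_mult_l_R, sum_n_m_const.
  replace (S N - 1)%nat with N by lia.
  pose proof (sum_Cmod_eta_partial_sq_le alpha N P). lra.
Qed.

Theorem sum_Cmod_zeta_half_sq_le_N_ln_N alpha : 0 < alpha ->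
  exists K, 0 <= K /\ forall N, (3 <= N)%nat ->
    sum_n_m (fun l => Cmod (zeta ((1/2)%R, alpha * INR l)) ^ 2) 1 N <= K * (INR N * ln (INR N)).
Proof.
  intros Ha. pose proof PI_RGT_0. pose proof ln2_pos.
  destruct (nfloor_ex (alpha * ln 2 / PI)) as [w0 Hw0]; [apply Rdiv_le_0_compat; nra|].
  set (W := (w0 + 3)%nat).
  assert (HW : alpha * ln 2 / PI + 2 <= INR W) by (unfold W; rewrite plus_INR; simpl; lra).
  set (RR := alpha * ln 2 + PI + INR W * PI).
  set (C := 48 * INR W * (2 + ln (alpha + 1)) + 256 * INR W * (1 + ln (1 + RR)) * (alpha + 1) / alpha).
  assert (HC : 0 <= C).
  { assert (0 <= ln (alpha + 1) /\ 0 <= ln (1 + RR)) as [Hc1 Hc2]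
      by (unfold RR; pose proof (pos_INR W); split; rewrite <- ln_1; apply ln_le; nra).
    assert (0 <= INR W * (1 + ln (1 + RR)) * (alpha + 1) / alpha)
      by (apply Rdiv_le_0_compat; [repeat apply Rmult_le_pos; try apply pos_INR|]; lra).
    unfold C. pose proof (pos_INR W). nra. }
  exists (14 * C + 1400). split; [lra|]. intros N HN.
  destruct (nfloor_ex (alpha * INR N)) as [k Hk]; [pose proof (pos_INR N); nra|].
  assert (HN1 : 1 <= INR N) by (apply (le_INR 1); lia).
  pose proof (ln_INR_ge_1 N HN). pose proof (pos_INR k).
  eapply Rle_trans; [apply (sum_Cmod_zeta_half_sq_le_cross alpha N (S k)); [lra | rewrite !S_INR; lra]|].
  pose proof (sum_cross_term_le_N_ln_N alpha N W (S k) Ha HN ltac:(lia) HW ltac:(rewrite S_INR; lra))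
    as Hcross.
  fold RR C in Hcross.
  assert (INR N <= INR N * ln (INR N)) by nra.
  set (X := INR N * ln (INR N)) in *.
  replace ((14 * C + 1400) * X) with (14 * (C * X) + 1400 * X) by ring. lra.
Qed.

Theorem lemma2p4 (alpha : R) (halpha : 0 < alpha) :
  exists (K : R) (N0 : nat),
    forall N : nat, (N0 <= N)%nat ->
      sum_n_m (fun l : nat => (Cmod (zeta ((1/2)%R, (alpha * INR l)%R))) ^ 2) 1 N
        <= K * INR N * Rpower (ln (INR N)) (3/2).
Proof.
  destruct (sum_Cmod_zeta_half_sq_le_N_ln_N alpha halpha) as [K [HK Hbound]].
  exists K, 3%nat. intros N HN.
  eapply Rle_trans; [now apply Hbound|].
  pose proof (ln_INR_ge_1 N HN). pose proof (pos_INR N).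
  pose proof (Rpower_ge_self (ln (INR N)) (3/2) ltac:(lra) ltac:(lra)).
  rewrite Rmult_assoc. apply Rmult_le_compat_l; [lra|]. nra.
Qed.
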